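(* Let $\mathcal{A}$ be a finite set of positive integers, let $w \leqslant z$ be real numbers, let $0 < m_0 \leqslant 1$, and let $m_1, m_2$ be real numbers with $(m_1, m_2) \in \mathcal{U}$. Then $$ S(\mathcal{A}, z) \geqslant S(\mathcal{A}, w) - \frac{m_0m_1 + m_0m_2 + m_1m_2 - m_0 - m_1 - m_2 + 1}{m_0m_1m_2} \sum_{w \leqslant p_1 < z} S(\mathcal{A}_{p_1}, w) + \frac{2(m_0 + m_1 + m_2 - 3)}{m_0m_1m_2} \sum_{w \leqslant p_2 < p_1 < z} S(\mathcal{A}_{p_1p_2}, w) - \frac{6}{m_0m_1m_2} \sum_{w \leqslant p_3 < p_2 < p_1 < z} S(\mathcal{A}_{p_1p_2p_3}, w). $$
   Context: Throughout, $p, p_1, p_2, \dots$ denote prime numbers. For a finite set $\mathcal{A}$ of positive integers and a positive integer $d$, $\mathcal{A}_d = \{a : ad \in \mathcal{A}\}$. For real $z$, $S(\mathcal{A}, z)$ denotes the number of $a \in \mathcal{A}$ having no prime factor less than $z$. Let $T = (0,1] \cup [2,3] \cup [4,5] \cup \cdots$, i.e. $T$ is the union of $(0,1]$ and the intervals $[k-1,k]$ over all odd integers $k \geqslant 3$, and let $\mathcal{U} = \{(x_1, x_2) : x_1, x_2 \in T,\ |x_1 - x_2| \leqslant 1\}$. *)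

From mathcomp Require Import all_boot all_order all_algebra.
From mathcomp Require Import reals.
Set Implicit Arguments. Unset Strict Implicit. Unset Printing Implicit Defensive.
Import Order.TTheory GRing.Theory Num.Theory.
Local Open Scope ring_scope.

Section Defs.
Variable R : realType.

(* A_d = {a : a d in A}, for A a finite set of positive integers given as a
   duplicate-free sequence *)
Definition sieve_sub (A : seq nat) (d : nat) : seq nat :=
  [seq (a %/ d)%N | a <- A & (d %| a)%N].

Definition rough (z : R) (a : nat) : bool :=
  all (fun p => z <= p%:R) (primes a).

Definition S (A : seq nat) (z : R) : nat := count (rough z) A.

(* the primes p with w <= p < z (all such p are <= truncn |z|) *)
Definition primes_between (w z : R) : seq nat :=
  [seq p <- iota 0 (Num.truncn `|z|).+1 | prime p && (w <= p%:R) && (p%:R < z)].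

(* T = (0,1] U [2,3] U [4,5] U ... *)
Definition inT (x : R) : Prop :=
  (0 < x <= 1) \/ (exists k : nat, odd k /\ (3 <= k)%N /\ (k.-1)%:R <= x <= k%:R).

Definition inU (x1 x2 : R) : Prop := inT x1 /\ inT x2 /\ `|x1 - x2| <= 1.

End Defs.

From mathcomp Require Import all_boot all_order all_algebra.
From mathcomp Require Import reals.
From mathcomp Require Import lra zify ring.
Import Order.TTheory GRing.Theory Num.Theory.

Set Implicit Arguments.
Unset Strict Implicit.

(* Fix a with no prime factor below w, and let k be the number of primes in
   [w, z) dividing a.  Exchanging summations, a contributes 1, k, C(k,2) and
   C(k,3) to S(A, w) and to the three prime sums, so its total weight on the
   right-hand side is sieve_weight m0 m1 m2 k = (m0 - k)(m1 - k)(m2 - k) / (m0 m1 m2).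
   For k = 0 this is 1, and a is then counted in S(A, z).  For k >= 1 we have
   m0 - k <= 0, while (m1 - k)(m2 - k) >= 0 because no integer lies strictly
   between two points of T at distance at most 1; so the weight is <= 0. *)

Lemma count_sum_nat (T : Type) (a : pred T) (s : seq T) :
  count a s = (\sum_(x <- s) (a x : nat))%N.
Proof. by elim: s => [|x s IH]; rewrite ?big_nil ?big_cons //= IH. Qed.

Section CountSortedTuples.
Variable Q : pred nat.

Lemma sum_ltn_min x L (G : nat -> nat) : all (ltn x) L ->
  (\sum_(y <- x :: L | y < x) G y = 0)%N.
Proof.
move=> /allP xL; rewrite big_cons ltnn big_seq_cond big1 // => y /andP[/xL xy].
by rewrite ltnNge ltnW.
Qed.

Lemma sum_ltn_pairs L : sorted ltn L ->
  (\sum_(x <- L) \sum_(y <- L | y < x) (Q x && Q y : nat) = 'C(count Q L, 2))%N.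
Proof.
elim: L => [|x L IH] /= sortedxL; first by rewrite big_nil.
have sortedL := path_sorted sortedxL.
have xL : all (ltn x) L := order_path_min ltn_trans sortedxL.
rewrite big_cons sum_ltn_min // add0n.
rewrite (eq_big_seq (fun x' => (Q x' && Q x : nat) +
                               \sum_(y <- L | y < x') (Q x' && Q y : nat)))%N; last first.
  by move=> x' /(allP xL) xx'; rewrite big_cons ifT.
rewrite big_split /= IH //; case: (Q x) => /=.
  rewrite add1n binS bin1 addnC count_sum_nat; congr (_ + _).
  by apply: eq_bigr => y _; rewrite andbT.
by rewrite add0n big1 // => y _; rewrite andbF.
Qed.

Lemma sum_ltn_triples L : sorted ltn L ->
  (\sum_(x <- L) \sum_(y <- L | y < x) \sum_(u <- L | u < y) (Q x && Q y && Q u : nat)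
   = 'C(count Q L, 3))%N.
Proof.
elim: L => [|x L IH] /= sortedxL; first by rewrite big_nil.
have sortedL := path_sorted sortedxL.
have xL : all (ltn x) L := order_path_min ltn_trans sortedxL.
rewrite big_cons sum_ltn_min // add0n.
rewrite (eq_big_seq (fun x' =>
           \sum_(y <- L | y < x') (Q x' && Q y && Q x : nat) +
           \sum_(y <- L | y < x') \sum_(u <- L | u < y) (Q x' && Q y && Q u : nat)))%N;
  last first.
  move=> x' /(allP xL) xx'; rewrite big_cons ifT // sum_ltn_min // add0n -big_split /=.
  rewrite big_seq_cond [RHS]big_seq_cond.
  by apply: eq_bigr => y /andP[/(allP xL) xy _]; rewrite big_cons ifT.
rewrite big_split /= IH //; case: (Q x) => /=.
  rewrite add1n binS addnC -(sum_ltn_pairs sortedL); congr (_ + _).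
  by apply: eq_bigr => x' _; apply: eq_bigr => y _; rewrite andbT.
by rewrite add0n big1 // => x' _; rewrite big1 // => y _; rewrite andbF.
Qed.

End CountSortedTuples.

Local Open Scope ring_scope.

Section SieveSums.
Variable R : realType.
Variables w z : R.

Lemma mem_primes_between p :
  (p \in primes_between w z) = [&& prime p, w <= p%:R & p%:R < z].
Proof.
rewrite mem_filter mem_iota add0n leq0n /= ltnS.
have [pz|] := boolP (p%:R < z); last by rewrite !andbF.
have pz' : p%:R <= `|z| by have := ler_norm z; lra.
by rewrite truncn_ge_nat ?normr_ge0 // pz' !andbT.
Qed.

Lemma sorted_primes_between : sorted ltn (primes_between w z).
Proof. exact: (sorted_filter ltn_trans _ (iota_ltn_sorted 0 _)). Qed.

Lemma primes_between_prime p : p \in primes_between w z -> prime p.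
Proof. by rewrite mem_primes_between => /and3P[]. Qed.

Lemma primes_between_ge p : p \in primes_between w z -> w <= p%:R.
Proof. by rewrite mem_primes_between => /and3P[]. Qed.

Lemma roughM m n : (0 < m)%N -> (0 < n)%N ->
  rough w (m * n) = rough w m && rough w n.
Proof.
move=> m_gt0 n_gt0; have primesM_cat : primes (m * n) =i primes m ++ primes n.
  by move=> p; rewrite primesM // mem_cat.
by rewrite /rough -all_cat (eq_all_r primesM_cat).
Qed.

Lemma rough_prime p : prime p -> rough w p = (w <= p%:R).
Proof. by move=> pp; rewrite /rough primes_prime //= andbT. Qed.

Lemma S_sieve_sub A d : (0 < d)%N -> rough w d ->
  S (sieve_sub A d) w = (\sum_(a <- A) (rough w a && (d %| a)%N : nat))%N.
Proof.
move=> d_gt0 rough_d; rewrite /S /sieve_sub count_map count_filter count_sum_nat.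
apply: eq_bigr => a _ /=; case da: (d %| a)%N; rewrite ?andbF // !andbT.
have [->|a_gt0] := posnP a; first by rewrite div0n.
have ad_gt0 : (0 < a %/ d)%N by rewrite divn_gt0 // dvdn_leq.
by rewrite -{2}(divnK da) roughM // rough_d andbT.
Qed.

Lemma dvdn_mul_primes2 a p1 p2 : prime p1 -> prime p2 -> (p2 < p1)%N ->
  (p1 * p2 %| a)%N = (p1 %| a)%N && (p2 %| a)%N.
Proof.
move=> pp1 pp2 p21; rewrite Gauss_dvd // prime_coprime // dvdn_prime2 //.
by rewrite gtn_eqF.
Qed.

Lemma dvdn_mul_primes3 a p1 p2 p3 : prime p1 -> prime p2 -> prime p3 ->
  (p2 < p1)%N -> (p3 < p2)%N ->
  (p1 * p2 * p3 %| a)%N = (p1 %| a)%N && (p2 %| a)%N && (p3 %| a)%N.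
Proof.
move=> pp1 pp2 pp3 p21 p32; rewrite Gauss_dvd ?dvdn_mul_primes2 //.
rewrite coprimeMl !prime_coprime // !dvdn_prime2 // !gtn_eqF //.
exact: ltn_trans p32 p21.
Qed.

Definition omega_between (a : nat) : nat :=
  count (fun p => (p %| a)%N) (primes_between w z).

Lemma sum_S_sieve_sub1 A :
  (\sum_(p1 <- primes_between w z) S (sieve_sub A p1) w
   = \sum_(a <- A) rough w a * omega_between a)%N.
Proof.
rewrite big_seq (eq_bigr (fun p1 => \sum_(a <- A) (rough w a && (p1 %| a)%N : nat)));
  last first.
  move=> p1 P1; have pp1 := primes_between_prime P1.
  by rewrite S_sieve_sub ?prime_gt0 // rough_prime // primes_between_ge.
rewrite -big_seq exchange_big; apply: eq_bigr => a _.
by case: (rough w a); rewrite ?mul1n ?mul0n /omega_between ?count_sum_nat // big1.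
Qed.

Lemma sum_S_sieve_sub2 A :
  (\sum_(p1 <- primes_between w z) \sum_(p2 <- primes_between w z | p2 < p1)
     S (sieve_sub A (p1 * p2)) w
   = \sum_(a <- A) rough w a * 'C(omega_between a, 2))%N.
Proof.
under eq_big_seq => p1 P1.
  rewrite big_seq_cond.
  under eq_bigr => p2 /andP[P2 p21].
    have [pp1 pp2] := (primes_between_prime P1, primes_between_prime P2).
    rewrite S_sieve_sub ?muln_gt0 ?prime_gt0 //; last first.
      by rewrite roughM ?prime_gt0 // !rough_prime // !primes_between_ge.
    under eq_bigr do rewrite dvdn_mul_primes2 //.
  over.
  rewrite -big_seq_cond exchange_big.
over.
rewrite exchange_big; apply: eq_bigr => a _.
rewrite /omega_between -(sum_ltn_pairs _ sorted_primes_between).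
by case: (rough w a); rewrite ?mul1n ?mul0n // big1 // => p1 _; rewrite big1.
Qed.

Lemma sum_S_sieve_sub3 A :
  (\sum_(p1 <- primes_between w z) \sum_(p2 <- primes_between w z | p2 < p1)
     \sum_(p3 <- primes_between w z | p3 < p2) S (sieve_sub A (p1 * p2 * p3)) w
   = \sum_(a <- A) rough w a * 'C(omega_between a, 3))%N.
Proof.
under eq_big_seq => p1 P1.
  rewrite big_seq_cond.
  under eq_bigr => p2 /andP[P2 p21].
    rewrite big_seq_cond.
    under eq_bigr => p3 /andP[P3 p32].
      have pp1 := primes_between_prime P1; have pp2 := primes_between_prime P2.
      have pp3 := primes_between_prime P3.
      rewrite S_sieve_sub ?muln_gt0 ?prime_gt0 //; last first.
        by rewrite !roughM ?muln_gt0 ?prime_gt0 // !rough_prime // !primes_between_ge.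
      under eq_bigr do rewrite dvdn_mul_primes3 //.
    over.
    rewrite -big_seq_cond exchange_big.
  over.
  rewrite -big_seq_cond exchange_big.
over.
rewrite exchange_big; apply: eq_bigr => a _.
rewrite /omega_between -(sum_ltn_triples _ sorted_primes_between).
case: (rough w a); rewrite ?mul1n ?mul0n // big1 // => p1 _.
by rewrite big1 // => p2 _; rewrite big1.
Qed.

Lemma rough_omega_between0 a :
  rough w a -> omega_between a = 0%N -> rough z a.
Proof.
move=> /allP rough_a omega0; apply/allP => p pa.
have [pz|//] := ltP p%:R z; have wp := rough_a p pa.
move: pa; rewrite mem_primes => /and3P[pp _ pa].
have : has (fun q => (q %| a)%N) (primes_between w z).
  by apply/hasP; exists p; rewrite ?mem_primes_between ?pp ?wp.
by rewrite has_count -/(omega_between a) omega0.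
Qed.

End SieveSums.

Section PointsOfT.
Variable R : realType.
Implicit Types x y : R.

Lemma inT_gt0 x : inT x -> 0 < x.
Proof.
case=> [/andP[] // | [k [_ [k_ge3 /andP[kx _]]]]].
have : 2%:R <= k.-1%:R :> R by rewrite ler_nat; lia.
lra.
Qed.

Lemma inT_block x : inT x -> exists j : nat, (2 * j)%:R <= x <= (2 * j).+1%:R.
Proof.
case=> [/andP[x_gt0 x_le1] | [k [odd_k [_ /andP[kx xk]]]]].
  by exists 0%N; rewrite muln0 /= mulr1n; apply/andP; split; lra.
have [j k_eq] : exists j, k = (2 * j).+1.
  by exists k./2; have := odd_double_half k; rewrite odd_k -mul2n add1n.
by move: kx xk; rewrite k_eq /= => jx xj; exists j; rewrite jx xj.
Qed.

Lemma inT_no_nat_between x y (n : nat) : inT x -> inT y -> y <= x + 1 ->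
  ~~ (x < n%:R < y).
Proof.
move=> Tx Ty yx; apply/negP => /andP[xn ny].
have [j /andP[jx xj]] := inT_block Tx; have [i /andP[iy yi]] := inT_block Ty.
have jn : (2 * j < n)%N by rewrite -(ltr_nat R); lra.
have nj : (n < (2 * j).+2)%N by rewrite -(ltr_nat R) -natr1; lra.
have ni : (n < (2 * i).+1)%N by rewrite -(ltr_nat R); lra.
have n_eq : n = (2 * j).+1 by lia.
have : (2 * j).+2%:R <= (2 * i)%:R :> R by rewrite ler_nat; lia.
rewrite -natr1 -n_eq; lra.
Qed.

Lemma inU_mul_subn_ge0 (m1 m2 : R) (n : nat) :
  inU m1 m2 -> 0 <= (m1 - n%:R) * (m2 - n%:R).
Proof.
move=> [T1 [T2]]; rewrite ler_norml => /andP[m12 m21].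
have [n_m1|m1_n] := leP n%:R m1; have [n_m2|m2_n] := leP n%:R m2.
- by rewrite mulr_ge0 // subr_ge0.
- have [->|n_ne_m1] := eqVneq m1 n%:R; first by rewrite subrr mul0r.
  have /negP[] : ~~ (m2 < n%:R < m1) by apply: inT_no_nat_between => //; lra.
  by rewrite m2_n lt_neqAle eq_sym n_ne_m1 n_m1.
- have [->|n_ne_m2] := eqVneq m2 n%:R; first by rewrite subrr mulr0.
  have /negP[] : ~~ (m1 < n%:R < m2) by apply: inT_no_nat_between => //; lra.
  by rewrite m1_n lt_neqAle eq_sym n_ne_m2 n_m2.
- by rewrite mulr_le0 // subr_le0 ltW.
Qed.

End PointsOfT.

Section SieveWeight.
Variable R : realType.

Lemma bin2_natr (k : nat) : 'C(k, 2)%:R * 2 = k%:R * (k%:R - 1) :> R.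
Proof.
elim: k => [|k IH]; first by rewrite !mul0r.
by rewrite binS bin1 natrD -[k.+1%:R]natr1 mulrDl IH; ring.
Qed.

Lemma bin3_natr (k : nat) :
  'C(k, 3)%:R * 6 = k%:R * (k%:R - 1) * (k%:R - 2) :> R.
Proof.
elim: k => [|k IH]; first by rewrite !mul0r.
have := bin2_natr k; rewrite binS natrD -[k.+1%:R]natr1 mulrDl IH.
nra.
Qed.

Definition sieve_weight (m0 m1 m2 : R) (k : nat) : R :=
  1 - (m0 * m1 + m0 * m2 + m1 * m2 - m0 - m1 - m2 + 1) / (m0 * m1 * m2) * k%:R
    + (2 * (m0 + m1 + m2 - 3)) / (m0 * m1 * m2) * 'C(k, 2)%:R
    - 6 / (m0 * m1 * m2) * 'C(k, 3)%:R.

Lemma sieve_weightE (m0 m1 m2 : R) (k : nat) :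
  m0 != 0 -> m1 != 0 -> m2 != 0 ->
  sieve_weight m0 m1 m2 k
  = (m0 - k%:R) * (m1 - k%:R) * (m2 - k%:R) / (m0 * m1 * m2).
Proof.
move=> m0_neq0 m1_neq0 m2_neq0.
have bin2E : 'C(k, 2)%:R = k%:R * (k%:R - 1) / 2 :> R.
  by rewrite -bin2_natr mulfK ?pnatr_eq0.
have bin3E : 'C(k, 3)%:R = k%:R * (k%:R - 1) * (k%:R - 2) / 6 :> R.
  by rewrite -bin3_natr mulfK ?pnatr_eq0.
by rewrite /sieve_weight bin2E bin3E; field; rewrite m0_neq0 m1_neq0 m2_neq0.
Qed.

Lemma sieve_weight_le0 (m0 m1 m2 : R) (k : nat) :
  0 < m0 <= 1 -> inU m1 m2 -> (0 < k)%N -> sieve_weight m0 m1 m2 k <= 0.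
Proof.
move=> /andP[m0_gt0 m0_le1] U12 k_gt0; have [T1 [T2 _]] := U12.
have [m1_gt0 m2_gt0] := (inT_gt0 T1, inT_gt0 T2).
have k_ge1 : 1 <= k%:R :> R by rewrite ler1n.
rewrite sieve_weightE ?gt_eqF //; apply: mulr_le0_ge0.
  by rewrite -mulrA; apply: mulr_le0_ge0; [lra | exact: inU_mul_subn_ge0].
by rewrite invr_ge0 !mulr_ge0 // ltW.
Qed.

End SieveWeight.

Theorem theorem5 (R : realType) (A : seq nat) (w z m0 m1 m2 : R) :
  uniq A -> all (fun a => (0 < a)%N) A ->
  w <= z -> 0 < m0 <= 1 -> inU m1 m2 ->
  (S A z)%:R >=
    (S A w)%:R
    - (m0 * m1 + m0 * m2 + m1 * m2 - m0 - m1 - m2 + 1) / (m0 * m1 * m2)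
        * \sum_(p1 <- primes_between w z) (S (sieve_sub A p1) w)%:R
    + (2 * (m0 + m1 + m2 - 3)) / (m0 * m1 * m2)
        * \sum_(p1 <- primes_between w z) \sum_(p2 <- primes_between w z | (p2 < p1)%N)
            (S (sieve_sub A (p1 * p2)) w)%:R
    - 6 / (m0 * m1 * m2)
        * \sum_(p1 <- primes_between w z) \sum_(p2 <- primes_between w z | (p2 < p1)%N)
            \sum_(p3 <- primes_between w z | (p3 < p2)%N)
              (S (sieve_sub A (p1 * p2 * p3)) w)%:R.
Proof.
move=> _ _ _ m0_bounds U12.
set omega := omega_between w z.
have sum1 : \sum_(p1 <- primes_between w z) (S (sieve_sub A p1) w)%:R
            = (\sum_(a <- A) rough w a * omega a)%N%:R :> R.
  by rewrite -sum_S_sieve_sub1 natr_sum.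
have sum2 : \sum_(p1 <- primes_between w z) \sum_(p2 <- primes_between w z | (p2 < p1)%N)
              (S (sieve_sub A (p1 * p2)) w)%:R
            = (\sum_(a <- A) rough w a * 'C(omega a, 2))%N%:R :> R.
  by rewrite -sum_S_sieve_sub2 natr_sum; under eq_bigr do rewrite natr_sum.
have sum3 : \sum_(p1 <- primes_between w z) \sum_(p2 <- primes_between w z | (p2 < p1)%N)
              \sum_(p3 <- primes_between w z | (p3 < p2)%N)
              (S (sieve_sub A (p1 * p2 * p3)) w)%:R
            = (\sum_(a <- A) rough w a * 'C(omega a, 3))%N%:R :> R.
  rewrite -sum_S_sieve_sub3 natr_sum.
  by under eq_bigr do rewrite natr_sum; under eq_bigr do under eq_bigr do rewrite natr_sum.
rewrite sum1 sum2 sum3 /S !count_sum_nat !natr_sum !mulr_sumr -!sumrB -big_split -sumrB /=.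
apply: ler_sum => a _; have rough_z_ge0 := ler0n R (rough z a).
case rough_wa: (rough w a); rewrite /= ?mul0n ?mul1n; last first.
  by rewrite !mulr0 subrr addr0 subr0.
have [omega0|omega_gt0] := posnP (omega a).
  by rewrite (rough_omega_between0 rough_wa omega0) omega0 !mulr0 subr0 addr0 subr0.
by have := sieve_weight_le0 m0_bounds U12 omega_gt0; rewrite /sieve_weight; lra.
Qed.
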